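(* Let $R$ be the ring of integers of a nonarchimedean local field $F$ of characteristic not $2$ in which $2$ is a prime element of $R$. For every positive integer $n$, the minimal rank of an even $R$-lattice that primitively represents all even $R$-lattices of rank $n$ is exactly $2n$.
   Context: An $R$-lattice is a finitely generated $R$-submodule $L$ of a quadratic space $(V,B)$ over $F$ with $Q(v)=B(v,v)$, assumed integral ($B(L,L)\subseteq R$) and nondegenerate. $L$ is even if $Q(L)\subseteq 2R$. A representation of $L$ into $M$ is an $R$-linear map preserving $B$; it is primitive if its image is a direct summand of $M$. *)

From HB Require Import structures.
From mathcomp Require Import all_boot all_order all_algebra.
Set Implicit Arguments. Unset Strict Implicit. Unset Printing Implicit Defensive.
Import Order.TTheory GRing.Theory Num.Theory.
Local Open Scope ring_scope.

Section Defs.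
Variable R : idomainType.

Definition rdvd (a b : R) : Prop := exists w : R, b = a * w.

(* R is the ring of integers of a nonarchimedean local field F (= Frac R)
   of characteristic <> 2 in which 2 is a prime element of R:
   R is a complete discrete valuation ring with uniformizer 2 and finite
   residue field. *)
Definition uniformizer2 : Prop :=
  (2 : R) != 0 /\ (2 : R) \isn't a GRing.unit /\
  forall x : R, x != 0 ->
    exists (u : R) (k : nat), u \is a GRing.unit /\ x = u * 2 ^+ k.

Definition finite_residue_field : Prop :=
  exists s : seq R, forall x : R, exists2 y, y \in s & rdvd 2 (x - y).

Definition complete2 : Prop :=
  forall x : nat -> R, (forall k, rdvd (2 ^+ k) (x k.+1 - x k)) ->
    exists y : R, forall k, rdvd (2 ^+ k) (y - x k).

Definition local_int_ring_2_prime : Prop :=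
  [/\ uniformizer2, finite_residue_field & complete2].

(* An R-lattice of rank n is given (up to isometry) by its Gram matrix
   G = (B(e_i, e_j)) in a basis e_1..e_n (R is a PID, lattices are free). *)
Definition integral_nondeg_lattice n (G : 'M[R]_n) : Prop :=
  G^T = G /\ \det G != 0.

Definition Qform n (G : 'M[R]_n) (v : 'rV[R]_n) : R := (v *m G *m v^T) 0 0.

Definition even_lattice n (G : 'M[R]_n) : Prop :=
  integral_nondeg_lattice G /\ forall v : 'rV[R]_n, rdvd 2 (Qform G v).

(* A representation L -> M: the R-linear map a |-> a *m X (rows of X are
   the images of the basis of L) preserving B. *)
Definition represents_by n m (A : 'M[R]_n) (G : 'M[R]_m) (X : 'M[R]_(n, m)) :=
  X *m G *m X^T = A.

Definition is_submodule m (N : 'rV[R]_m -> Prop) : Prop :=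
  [/\ N 0, (forall u v, N u -> N v -> N (u + v)) & (forall r u, N u -> N (r *: u))].

Definition image_direct_summand n m (X : 'M[R]_(n, m)) : Prop :=
  exists N : 'rV[R]_m -> Prop,
    [/\ is_submodule N,
        (forall b : 'rV[R]_m, exists (a : 'rV[R]_n) (c : 'rV[R]_m), N c /\ b = a *m X + c)
      & (forall a : 'rV[R]_n, N (a *m X) -> a *m X = 0)].

Definition prim_represents n m (A : 'M[R]_n) (G : 'M[R]_m) : Prop :=
  exists X : 'M[R]_(n, m), represents_by A G X /\ image_direct_summand X.

End Defs.

From HB Require Import structures.
From mathcomp Require Import all_boot all_order all_algebra.
From mathcomp Require Import zify.
Set Implicit Arguments.
Unset Strict Implicit.
Unset Printing Implicit Defensive.
Import GRing.Theory.
Local Open Scope ring_scope.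

(** The hyperbolic lattice [H^n] of rank [2n] is even and unimodular, and an
    even [A] is represented primitively by [x |-> (x, x B)] for any [B] with
    [A = B + B^T] (such a [B] exists because the diagonal of [A] is even).
    Conversely, let [G] of rank [m < 2n] primitively represent [c I_n] via [X].
    Primitivity gives [Y] with [X Y = 1], and [G X^T = c Y + P G X^T] for the
    projection [P = 1 - Y X] of rank [m - n < n].  Multiplying by [Y^T adj G]
    gives [det G I_n = c S + Q] with [det Q = 0], hence [c] divides
    [(det G)^n].  Choosing [c] a power of the prime [2] exceeding the
    [2]-part of [(det G)^n] gives a contradiction. *)

Lemma det_scalar_subZ_congr (R : comNzRingType) n (a c : R) (S : 'M[R]_n) :
  exists r, \det (a%:M - c *: S) = a ^+ n + c * r.
Proof.
pose p := \det (map_mx polyC (a%:M : 'M_n) - 'X *: map_mx polyC S).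
have pE x : p.[x] = \det (a%:M - x *: S).
  rewrite -horner_evalE -det_map_mx; congr (\det _).
  by apply/matrixP => i j; rewrite !mxE /= horner_evalE !hornerE.
have p0 : p.[0] = a ^+ n by rewrite pE scale0r subr0 det_scalar.
have /factor_theorem[q pq] : root (p - p.[0]%:P) 0 by rewrite /root !hornerE subrr.
exists q.[c]; have := congr1 (horner^~ c) pq.
rewrite hornerD hornerN hornerC hornerM hornerXsubC subr0 p0 pE => /eqP.
by rewrite subr_eq => /eqP ->; rewrite addrC mulrC.
Qed.

Section FieldRank.
Variable F : fieldType.

Lemma mxrank_sub1_mul_linv m n (X : 'M[F]_(n, m)) (Y : 'M[F]_(m, n)) :
  X *m Y = 1%:M -> (\rank (1%:M - Y *m X)%R + n <= m)%N.
Proof.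
move=> XY.
have rY : (n <= \rank Y)%N by rewrite -{1}(mxrank1 F n) -XY mxrankM_maxr.
have PY0 : (1%:M - Y *m X) *m Y = 0.
  by rewrite mulmxBl mul1mx -mulmxA XY mulmx1 subrr.
have := mxrank_mul_min (1%:M - Y *m X) Y; rewrite PY0 mxrank0; lia.
Qed.

Lemma det_mul_rank_lt n m (K : 'M[F]_(n, m)) (P : 'M_m) (L : 'M_(m, n)) :
  (\rank P < n)%N -> \det (K *m P *m L) = 0.
Proof.
move=> rP; apply/eqP; apply: contraLR rP => /negbTE detN0.
have /mxrank_unit <- : K *m P *m L \in unitmx by rewrite unitmxE unitfE detN0.
by rewrite -leqNgt (leq_trans (mxrankM_maxl _ _)) ?mxrankM_maxr.
Qed.

End FieldRank.

Lemma det_mul_sub1_mul_linv (R : idomainType) m n (X : 'M[R]_(n, m))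
    (Y : 'M[R]_(m, n)) (K : 'M_(n, m)) (L : 'M_(m, n)) :
  X *m Y = 1%:M -> (m < n + n)%N -> \det (K *m (1%:M - Y *m X) *m L) = 0.
Proof.
move=> XY ltm; apply/eqP; rewrite -tofrac_eq0 -det_map_mx !map_mxM map_mxB.
rewrite map_mx1 map_mxM; apply/eqP/det_mul_rank_lt.
have XYf : map_mx (@tofrac R) X *m map_mx (@tofrac R) Y = 1%:M.
  by rewrite -map_mxM XY map_mx1.
rewrite -(ltn_add2r n); exact: leq_ltn_trans (mxrank_sub1_mul_linv XYf) ltm.
Qed.

Section Lattices.
Variable R : idomainType.

Lemma Qform_delta n (A : 'M[R]_n) i : Qform A (delta_mx 0 i) = A i i.
Proof. by rewrite /Qform -rowE trmx_delta -colE !mxE. Qed.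

Lemma image_direct_summand_linv n m (X : 'M[R]_(n, m)) :
  image_direct_summand X -> (forall a : 'rV_n, a *m X = 0 -> a = 0) ->
  exists Y : 'M_(m, n), X *m Y = 1%:M.
Proof.
move=> [N [[N0 ND NZ] dec inj]] Xinj.
have /fin_all_exists[a ha] : forall j : 'I_m,
    exists a : 'rV[R]_n, N (delta_mx 0 j - a *m X).
  move=> j; have [a [c [Nc ->]]] := dec (delta_mx 0 j).
  by exists a; rewrite addrAC subrr add0r.
pose Y : 'M[R]_(m, n) := \matrix_j a j.
have NY b : N (b - b *m Y *m X).
  rewrite {1 2}(row_sum_delta b) !mulmx_suml -sumrB.
  apply: (big_ind N) => // j _.
  by rewrite -!scalemxAl -scalerBr -rowE rowK; apply: NZ.
exists Y; apply/row_matrixP => i; rewrite !rowE mulmx1 mulmxA.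
apply/esym/eqP; rewrite -subr_eq0; apply/eqP/Xinj/inj.
by rewrite mulmxBl; apply: NY.
Qed.

Lemma prim_represents_scalar_dvd_det n m (G : 'M[R]_m) (c : R) :
  c != 0 -> (m < n + n)%N -> prim_represents (c%:M : 'M_n) G ->
  rdvd c (\det G ^+ n).
Proof.
move=> c0 ltm [X [rX hX]].
have Xinj (a : 'rV_n) : a *m X = 0 -> a = 0.
  move=> aX0; have : a *m c%:M = 0 by rewrite -rX !mulmxA aX0 !mul0mx.
  by rewrite mul_mx_scalar => /eqP; rewrite scalemx_eq0 (negbTE c0) => /eqP.
have [Y XY] := image_direct_summand_linv hX Xinj.
set M := G *m X^T; set S := Y^T *m \adj G *m Y.
have adjM : Y^T *m \adj G *m M = (\det G)%:M.
  rewrite /M !mulmxA -(mulmxA _ (\adj G)) mul_adj_mx mul_mx_scalar -scalemxAl.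
  by rewrite -trmx_mul XY trmx1 scalemx1.
have YXM : Y *m X *m M = c *: Y.
  by rewrite /M -!mulmxA (mulmxA X) rX mul_mx_scalar.
have QE : Y^T *m \adj G *m (1%:M - Y *m X) *m M = (\det G)%:M - c *: S.
  by rewrite mulmxBr mulmx1 mulmxBl adjM -(mulmxA _ (Y *m X)) YXM -scalemxAr.
have [r hr] := det_scalar_subZ_congr (\det G) c S.
exists (- r); apply/eqP; rewrite mulrN -addr_eq0 -hr -QE.
by rewrite (det_mul_sub1_mul_linv _ _ XY ltm).
Qed.

Lemma scalar_even_lattice n (c : R) :
  c != 0 -> rdvd 2 c -> even_lattice (c%:M : 'M_n).
Proof.
move=> c0 [w cE]; split.
  by split; rewrite ?tr_scalar_mx // det_scalar expf_neq0.
move=> v; exists (w * (v *m v^T) 0 0).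
by rewrite /Qform mul_mx_scalar -scalemxAl mxE cE mulrA.
Qed.

Lemma uniformizer2_pow_ndvd (x : R) :
  uniformizer2 R -> x != 0 -> exists k, ~ rdvd (2 ^+ k.+1) x.
Proof.
move=> [n2 [n2u fact]] /fact[u [k [uu ->]]]; exists k => -[w].
rewrite exprSr -mulrA [RHS]mulrC => /(mulIf (expf_neq0 k n2)) ue.
by move: uu; rewrite ue unitrM (negbTE n2u).
Qed.

Lemma even_universal_rank_ge n m (G : 'M[R]_m) :
  uniformizer2 R -> integral_nondeg_lattice G ->
  (forall A : 'M_n, even_lattice A -> prim_represents A G) -> (n + n <= m)%N.
Proof.
move=> hu [_ detG] univ; rewrite leqNgt; apply/negP => ltm.
have [k] := uniformizer2_pow_ndvd hu (expf_neq0 n detG); apply.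
have c0 : 2 ^+ k.+1 != 0 :> R by case: hu => n2 _; rewrite expf_neq0.
apply: (prim_represents_scalar_dvd_det c0 ltm (univ _ _)).
by apply: scalar_even_lattice c0 _; exists (2 ^+ k); rewrite exprS.
Qed.

Definition hyperbolic n : 'M[R]_(n + n) := block_mx 0 1%:M 1%:M 0.

Lemma Qform_hyperbolic n (v : 'rV[R]_(n + n)) :
  Qform (hyperbolic n) v = 2 * (rsubmx v *m (lsubmx v)^T) 0 0.
Proof.
rewrite -{1}(hsubmxK v) /Qform /hyperbolic mul_row_block !mulmx0 !mulmx1.
rewrite !add0r addr0 tr_row_mx mul_row_col mxE -[lsubmx v *m _]trmxK trmx_mul trmxK.
by rewrite [X in _ + X]mxE mulr_natl mulr2n.
Qed.

Lemma hyperbolic_even n : even_lattice (hyperbolic n).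
Proof.
have HH : hyperbolic n *m hyperbolic n = 1%:M.
  by rewrite mulmx_block !mulmx0 !mul0mx !mulmx1 !add0r !addr0 -scalar_mx_block.
split; [split|].
- by rewrite /hyperbolic tr_block_mx !trmx0 trmx1.
- apply: contra_neq (oner_neq0 R) => det0.
  by rewrite -(det1 R (n + n)) -HH det_mulmx det0 mul0r.
- by move=> v; rewrite Qform_hyperbolic; eexists.
Qed.

Lemma even_sym_decomp n (A : 'M[R]_n) :
  A^T = A -> (forall i, rdvd 2 (A i i)) -> exists B, B + B^T = A.
Proof.
move=> sA /fin_all_exists[w hw].
exists (\matrix_(i, j) if (i < j)%N then A i j else if i == j then w i else 0).
apply/matrixP => i j; rewrite !mxE.
case: (ltngtP i j) => [lij|lji|/val_inj eij].
- by rewrite -val_eqE (gtn_eqF lij) addr0.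
- by rewrite -val_eqE (gtn_eqF lji) add0r -[in RHS]sA mxE.
- by rewrite eij eqxx hw mulr_natl mulr2n.
Qed.

Lemma image_direct_summand_row1 n k (B : 'M[R]_(n, k)) :
  image_direct_summand (row_mx 1%:M B).
Proof.
exists (fun c => lsubmx c = 0); split.
- split=> [|u v hu hv|a u hu]; first exact: linear0.
    by rewrite linearD /= hu hv addr0.
  by rewrite linearZ /= hu scaler0.
- move=> b; exists (lsubmx b), (b - lsubmx b *m row_mx 1%:M B); split.
    by rewrite linearB /= mul_mx_row row_mxKl mulmx1 subrr.
  by rewrite addrC subrK.
- by move=> a; rewrite mul_mx_row row_mxKl mulmx1 => ->; rewrite mul0mx row_mx0.
Qed.

Lemma hyperbolic_prim_represents_even n (A : 'M[R]_n) :
  even_lattice A -> prim_represents A (hyperbolic n).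
Proof.
move=> [[sA _] eA].
have [B <-] : exists B, B + B^T = A.
  by apply: even_sym_decomp sA _ => i; rewrite -Qform_delta.
exists (row_mx 1%:M B); split; last exact: image_direct_summand_row1.
rewrite /represents_by /hyperbolic mul_row_block !mulmx0 !mulmx1 !addr0 !add0r.
by rewrite tr_row_mx mul_row_col trmx1 mulmx1 mul1mx.
Qed.

End Lattices.

Theorem mainTheorem4 (R : idomainType) (hR : local_int_ring_2_prime R)
    (n : nat) (hn : (0 < n)%N) :
  (exists G : 'M[R]_(2 * n),
      even_lattice G /\
      forall A : 'M[R]_n, even_lattice A -> prim_represents A G)
  /\
  (forall (m : nat) (G : 'M[R]_m),
      even_lattice G ->
      (forall A : 'M[R]_n, even_lattice A -> prim_represents A G) ->
      (2 * n <= m)%N).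
Proof.
have [hu _ _] := hR.
rewrite mul2n -addnn; split.
- exists (hyperbolic R n); split; first exact: hyperbolic_even.
  exact: hyperbolic_prim_represents_even.
- by move=> m G [hG _]; apply: even_universal_rank_ge.
Qed.
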